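(* Let $\Gamma$ be a connected, undirected graph without loops on $n$ nodes with Laplacian $\mathbf L=\mathbf K-\mathbf A$, and let $\phi_1,\dots,\phi_n$ be an orthonormal basis of eigenvectors of $\mathbf L$ with $\mathbf L\phi_i=\mu_i\phi_i$. Let $$\mathbf G=\begin{bmatrix}\mathbf 0&\mathbf I\\-\mathbf I&-\mathbf L\end{bmatrix},\qquad \mathbf P=(\mathbf G^T\mathbf G)^{1/2}$$ (the positive definite square root). Then the eigenvalues of $\mathbf P$ are the $n$ pairs of reciprocal values $$\lambda_i^{P\pm}=\tfrac12\Big[\sqrt{\mu_i^2+4}\pm\mu_i\Big],\quad i=1,\dots,n,$$ with corresponding normalized eigenvectors $$\psi_i^{P\pm}=\frac{1}{\sqrt{1+(\lambda_i^{P\pm})^2}}\begin{bmatrix}\phi_i\\ \pm\lambda_i^{P\pm}\phi_i\end{bmatrix}.$$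
   Context: $\mathbf A$ is the adjacency matrix, $\mathbf K$ the diagonal degree matrix, $\mathbf I,\mathbf 0$ the $n\times n$ identity and zero matrices. *)

From HB Require Import structures.
From mathcomp Require Import all_boot all_order all_algebra.
Set Implicit Arguments. Unset Strict Implicit. Unset Printing Implicit Defensive.
Import Order.TTheory GRing.Theory Num.Theory.
Local Open Scope ring_scope.

Section Defs.
Variable R : rcfType.

Definition simple_graph (n : nat) (e : rel 'I_n) : Prop :=
  symmetric e /\ irreflexive e.

Definition graph_connected (n : nat) (e : rel 'I_n) : Prop :=
  forall i j : 'I_n, connect e i j.

Definition adjmx (n : nat) (e : rel 'I_n) : 'M[R]_n :=
  \matrix_(i, j) (e i j)%:R.

Definition degmx (n : nat) (e : rel 'I_n) : 'M[R]_n :=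
  diag_mx (\row_i (\sum_j adjmx e i j)).

Definition laplacian (n : nat) (e : rel 'I_n) : 'M[R]_n := degmx e - adjmx e.

Definition Gmx (n : nat) (L : 'M[R]_n) : 'M[R]_(n + n) :=
  block_mx 0 1%:M (- 1%:M) (- L).

Definition posdef (m : nat) (P : 'M[R]_m) : Prop :=
  P^T = P /\ forall v : 'cV[R]_m, v != 0 -> 0 < (v^T *m P *m v) 0 0.

Definition lamP (mu : R) : R := (Num.sqrt (mu ^+ 2 + 4) + mu) / 2.
Definition lamM (mu : R) : R := (Num.sqrt (mu ^+ 2 + 4) - mu) / 2.

Definition psiP (n : nat) (phi : 'cV[R]_n) (mu : R) : 'cV[R]_(n + n) :=
  (Num.sqrt (1 + lamP mu ^+ 2))^-1 *: col_mx phi (lamP mu *: phi).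
Definition psiM (n : nat) (phi : 'cV[R]_n) (mu : R) : 'cV[R]_(n + n) :=
  (Num.sqrt (1 + lamM mu ^+ 2))^-1 *: col_mx phi (- (lamM mu *: phi)).

End Defs.

From HB Require Import structures.
From mathcomp Require Import all_boot all_order all_algebra.
From mathcomp Require Import ring lra.
Set Implicit Arguments. Unset Strict Implicit. Unset Printing Implicit Defensive.
Import Order.TTheory GRing.Theory Num.Theory.
Local Open Scope ring_scope.

(** Both [lamP mu] and [- lamM mu] are roots [x] of [x^2 = 1 + x mu].  Since
   [G^T G = [1, L; L, 1 + L^2]], for every such root and every eigenvector [phi]
   of [L] for [mu] the vector [[phi; x phi]] is an eigenvector of [G^T G] for
   [x^2], hence of its positive definite square root [P] for [|x|].  Normalising
   these [2n] vectors gives an orthonormal basis diagonalising [P], which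
   yields the characteristic polynomial. *)

Lemma char_poly_similar (R : comNzRingType) n (Q V D : 'M[R]_n) :
  V *m Q = 1%:M -> char_poly (Q *m D *m V) = char_poly D.
Proof.
move=> VQ; rewrite /char_poly /char_poly_mx.
have map_VQ : map_mx polyC V *m map_mx polyC Q = 1%:M.
  by rewrite -map_mxM VQ map_mx1.
have -> : 'X%:M - map_mx polyC (Q *m D *m V) =
          map_mx polyC Q *m ('X%:M - map_mx polyC D) *m map_mx polyC V.
  by rewrite !map_mxM mulmxBr mulmxBl mul_mx_scalar -scalemxAl (mulmx1C map_VQ) scalemx1.
by rewrite !det_mulmx mulrAC -det_mulmx (mulmx1C map_VQ) det1 mul1r.
Qed.

Lemma mulmx_col_eigen (R : comNzRingType) m n (A : 'M[R]_m) (M : 'M[R]_(m, n))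
    (d : 'I_n -> R) :
  (forall i, A *m col i M = d i *: col i M) -> A *m M = M *m diag_mx (\row_i d i).
Proof.
move=> AM; apply/matrixP => k i; rewrite mul_mx_diag !mxE mulrC.
by have /matrixP /(_ k 0) := AM i; rewrite !mxE => <-; apply: eq_bigr => j _; rewrite !mxE.
Qed.

Lemma tr_col_mul_col (R : nzRingType) m n p (A : 'M[R]_(m, n)) (B : 'M[R]_(m, p)) i j :
  (col i A)^T *m col j B = ((A^T *m B) i j)%:M.
Proof.
by apply/matrixP => a b; rewrite !ord1 !mxE /= mulr1n; apply: eq_bigr => k _; rewrite !mxE.
Qed.

Section Spectrum.
Variable R : rcfType.

Lemma posdef_sqrt_eigen m (P : 'M[R]_m) (v : 'cV[R]_m) (l : R) :
  posdef P -> 0 < l -> P *m (P *m v) = l ^+ 2 *: v -> P *m v = l *: v.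
Proof.
(* [u := P v - l v] satisfies [P u = - l u], which positivity allows only for [u = 0]. *)
move=> [_ P_pos] l_gt0 PPv; set u := P *m v - l *: v.
have Pu : P *m u = - l *: u.
  by rewrite mulmxBr PPv -scalemxAr scalerBr !scaleNr opprK scalerA -expr2 addrC.
apply/eqP; rewrite -subr_eq0 -/u; apply: contraT => u_neq0.
have := P_pos u u_neq0; rewrite -mulmxA Pu -scalemxAr mxE.
have : 0 <= (u^T *m u) 0 0.
  by rewrite mxE; apply: sumr_ge0 => k _; rewrite mxE -expr2 sqr_ge0.
nra.
Qed.

Lemma laplacian_sym n (e : rel 'I_n) : symmetric e -> (laplacian R e)^T = laplacian R e.
Proof.
move=> e_sym; rewrite /laplacian linearB /= /degmx tr_diag_mx; congr (_ - _).
by apply/matrixP => i j; rewrite !mxE e_sym.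
Qed.

Lemma Gmx_gram n (L : 'M[R]_n) :
  L^T = L -> (Gmx L)^T *m Gmx L = block_mx 1%:M L L (1%:M + L *m L).
Proof.
move=> L_sym; rewrite /Gmx tr_block_mx !linearN /= L_sym trmx0 trmx1.
by rewrite mulmx_block !mul0mx !mulNmx !mulmxN !opprK !mul1mx !mulmx1 !add0r.
Qed.

Lemma Gmx_gram_eigen n (L : 'M[R]_n) (phi : 'cV[R]_n) (mu x : R) :
  L^T = L -> L *m phi = mu *: phi -> x ^+ 2 = 1 + x * mu ->
  (Gmx L)^T *m Gmx L *m col_mx phi (x *: phi) = x ^+ 2 *: col_mx phi (x *: phi).
Proof.
move=> L_sym Lphi x_root; rewrite Gmx_gram // mul_block_col scale_col_mx.
rewrite mulmxDl !mul1mx -!scalemxAr -mulmxA !Lphi -!scalemxAr Lphi !scalerA.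
congr col_mx; apply/matrixP => k j; rewrite !mxE.
  by rewrite x_root; ring.
have x_cube : x ^+ 2 * x = x + mu * x ^+ 2 by rewrite {1}x_root; ring.
by rewrite x_cube x_root; ring.
Qed.

Lemma sqrt_discr_sqr (mu : R) : Num.sqrt (mu ^+ 2 + 4) ^+ 2 = mu ^+ 2 + 4.
Proof. by rewrite sqr_sqrtr // addr_ge0 // sqr_ge0. Qed.

Lemma lamP_gt0 (mu : R) : 0 < lamP mu.
Proof.
have := sqrt_discr_sqr mu; have := sqrtr_ge0 (mu ^+ 2 + 4).
by rewrite /lamP; set S := Num.sqrt _ => S_ge0 S_sqr; nra.
Qed.

Lemma lamM_gt0 (mu : R) : 0 < lamM mu.
Proof.
have := sqrt_discr_sqr mu; have := sqrtr_ge0 (mu ^+ 2 + 4).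
by rewrite /lamM; set S := Num.sqrt _ => S_ge0 S_sqr; nra.
Qed.

Lemma lamP_mul_lamM (mu : R) : lamP mu * lamM mu = 1.
Proof. by rewrite /lamP /lamM; have := sqrt_discr_sqr mu; set S := Num.sqrt _ => S_sqr; nra. Qed.

Lemma lamP_root (mu : R) : lamP mu ^+ 2 = 1 + lamP mu * mu.
Proof. by rewrite /lamP; have := sqrt_discr_sqr mu; set S := Num.sqrt _ => S_sqr; nra. Qed.

Lemma lamM_root (mu : R) : (- lamM mu) ^+ 2 = 1 + (- lamM mu) * mu.
Proof. by rewrite /lamM; have := sqrt_discr_sqr mu; set S := Num.sqrt _ => S_sqr; nra. Qed.

Definition normalizer (x : R) : R := (Num.sqrt (1 + x ^+ 2))^-1.

Definition psi n (phi : 'cV[R]_n) (x : R) : 'cV[R]_(n + n) :=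
  normalizer x *: col_mx phi (x *: phi).

Lemma psiM_psi n (phi : 'cV[R]_n) (mu : R) : psiM phi mu = psi phi (- lamM mu).
Proof. by rewrite /psiM /psi /normalizer sqrrN scaleNr. Qed.

Lemma normalizer_sqrK (x : R) : normalizer x ^+ 2 * (1 + x ^+ 2) = 1.
Proof.
have x_gt0 : 0 < 1 + x ^+ 2 by rewrite ltr_pwDl // sqr_ge0.
by rewrite /normalizer exprVn sqr_sqrtr ?ltW // mulVf ?gt_eqF.
Qed.

Lemma tr_psi_mul n (phi chi : 'cV[R]_n) (x y : R) :
  (psi phi x)^T *m psi chi y =
  (normalizer x * normalizer y * (1 + x * y)) *: (phi^T *m chi).
Proof.
rewrite /psi -scalemxAr !linearZ /= -scalemxAl tr_col_mx linearZ /= mul_row_col.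
rewrite [(x *: phi)^T]linearZ /= -scalemxAl -scalemxAr scalerA (scalerA x).
by rewrite -[X in X + _]scale1r -scalerDl scalerA.
Qed.

Lemma psi_normalized n (phi : 'cV[R]_n) (x : R) :
  phi^T *m phi = 1%:M -> (psi phi x)^T *m psi phi x = 1%:M.
Proof. by move=> phi_unit; rewrite tr_psi_mul phi_unit -!expr2 normalizer_sqrK scalemx1. Qed.

Definition psi_mx n (Phi : 'M[R]_n) (x : 'I_n -> R) : 'M[R]_(n + n, n) :=
  \matrix_(k, i) psi (col i Phi) (x i) k 0.

Lemma col_psi_mx n (Phi : 'M[R]_n) (x : 'I_n -> R) i :
  col i (psi_mx Phi x) = psi (col i Phi) (x i).
Proof. by apply/matrixP => k j; rewrite !mxE ord1. Qed.

Lemma psi_mx_gram n (Phi : 'M[R]_n) (x y : 'I_n -> R) :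
  Phi^T *m Phi = 1%:M ->
  (psi_mx Phi x)^T *m psi_mx Phi y =
  diag_mx (\row_i (normalizer (x i) * normalizer (y i) * (1 + x i * y i))).
Proof.
move=> Phi_orth; apply/matrixP => i j.
have -> : ((psi_mx Phi x)^T *m psi_mx Phi y) i j =
          ((col i (psi_mx Phi x))^T *m col j (psi_mx Phi y)) 0 0.
  by rewrite !mxE; apply: eq_bigr => k _; rewrite !mxE.
rewrite !col_psi_mx tr_psi_mul tr_col_mul_col Phi_orth !mxE /= mulr1n.
by case: eqVneq => [->|]; rewrite ?mulr1 ?mulr0.
Qed.

Section Eigenbasis.
Variables (n : nat) (L Phi : 'M[R]_n) (mu : 'I_n -> R) (P : 'M[R]_(n + n)).
Hypotheses (L_sym : L^T = L) (Phi_orth : Phi^T *m Phi = 1%:M).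
Hypothesis Phi_eigen : forall i, L *m col i Phi = mu i *: col i Phi.
Hypotheses (P_posdef : posdef P) (P_sqrt : P *m P = (Gmx L)^T *m Gmx L).

Lemma P_psi_eigen i (x : R) : x ^+ 2 = 1 + x * mu i ->
  P *m psi (col i Phi) x = `|x| *: psi (col i Phi) x.
Proof.
move=> x_root; apply: posdef_sqrt_eigen => //.
  rewrite normr_gt0; apply: contra_eqN x_root => /eqP->.
  by rewrite expr0n mul0r addr0 eq_sym oner_eq0.
rewrite mulmxA P_sqrt /psi -scalemxAr (Gmx_gram_eigen L_sym (Phi_eigen i) x_root).
by rewrite real_normK ?num_real // !scalerA mulrC.
Qed.

Lemma P_psi_mx (x : 'I_n -> R) : (forall i, x i ^+ 2 = 1 + x i * mu i) ->
  P *m psi_mx Phi x = psi_mx Phi x *m diag_mx (\row_i `|x i|).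
Proof. by move=> x_root; apply: mulmx_col_eigen => i; rewrite col_psi_mx P_psi_eigen. Qed.

Let Q := row_mx (psi_mx Phi (fun i => lamP (mu i))) (psi_mx Phi (fun i => - lamM (mu i))).
Let D := diag_mx (row_mx (\row_i lamP (mu i)) (\row_i lamM (mu i))).

Lemma eigenbasis_orthogonal : Q^T *m Q = 1%:M.
Proof.
rewrite tr_row_mx mul_col_row !psi_mx_gram // scalar_mx_block -diag_const_mx.
rewrite -(raddf0 (@diag_mx R n)).
congr block_mx; congr diag_mx; apply/rowP => i; rewrite !mxE.
- by rewrite -!expr2 normalizer_sqrK.
- by rewrite mulrN lamP_mul_lamM subrr mulr0.
- by rewrite mulNr (mulrC (lamM _)) lamP_mul_lamM subrr mulr0.
- by rewrite -!expr2 normalizer_sqrK.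
Qed.

Lemma P_diagonalized : P = Q *m D *m Q^T.
Proof.
have P_Q : P *m Q = Q *m D.
  rewrite mul_mx_row (P_psi_mx (fun i => lamP_root (mu i))).
  rewrite (P_psi_mx (fun i => lamM_root (mu i))).
  rewrite /D diag_mx_row mul_row_block !mulmx0 addr0 add0r.
  by congr (row_mx (_ *m diag_mx _) (_ *m diag_mx _)); apply/rowP => i; rewrite !mxE
    ?normrN gtr0_norm ?lamP_gt0 ?lamM_gt0.
by rewrite -P_Q -mulmxA (mulmx1C eigenbasis_orthogonal) mulmx1.
Qed.

Lemma char_poly_P :
  char_poly P = \prod_(i < n) (('X - (lamP (mu i))%:P) * ('X - (lamM (mu i))%:P)).
Proof.
rewrite P_diagonalized char_poly_similar ?eigenbasis_orthogonal //.
rewrite char_poly_trig ?diag_mx_is_trig // big_split_ord big_split /=.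
by congr (_ * _); apply: eq_bigr => i _; rewrite /D mxE eqxx mulr1n ?row_mxEl ?row_mxEr mxE.
Qed.

End Eigenbasis.
End Spectrum.

Theorem proposition5 (R : rcfType) (n : nat) (e : rel 'I_n)
    (Phi : 'M[R]_n) (mu : 'I_n -> R) (P : 'M[R]_(n + n)) :
  simple_graph e -> graph_connected e ->
  (* columns of Phi form an orthonormal basis of eigenvectors of L *)
  Phi^T *m Phi = 1%:M ->
  (forall i : 'I_n, laplacian R e *m col i Phi = mu i *: col i Phi) ->
  (* P is the positive definite square root of G^T G *)
  posdef P -> P *m P = (Gmx (laplacian R e))^T *m Gmx (laplacian R e) ->
  (* the eigenvalues of P (with multiplicity) are the lambda_i^{P+-} *)
  char_poly P = \prod_(i < n) (('X - (lamP (mu i))%:P) * ('X - (lamM (mu i))%:P))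
  /\ (forall i : 'I_n,
        lamP (mu i) * lamM (mu i) = 1
     /\ P *m psiP (col i Phi) (mu i) = lamP (mu i) *: psiP (col i Phi) (mu i)
     /\ P *m psiM (col i Phi) (mu i) = lamM (mu i) *: psiM (col i Phi) (mu i)
     /\ (psiP (col i Phi) (mu i))^T *m psiP (col i Phi) (mu i) = 1%:M
     /\ (psiM (col i Phi) (mu i))^T *m psiM (col i Phi) (mu i) = 1%:M).
Proof.
move=> [e_sym _] _ Phi_orth Phi_eigen P_posdef P_sqrt.
have L_sym := laplacian_sym R e_sym.
split; first exact: char_poly_P L_sym Phi_orth Phi_eigen P_posdef P_sqrt.
have phi_unit i : (col i Phi)^T *m col i Phi = 1%:M.
  by rewrite tr_col_mul_col Phi_orth mxE eqxx.
move=> i; rewrite !psiM_psi.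
have eigP := P_psi_eigen L_sym Phi_eigen P_posdef P_sqrt (lamP_root (mu i)).
have eigM := P_psi_eigen L_sym Phi_eigen P_posdef P_sqrt (lamM_root (mu i)).
rewrite gtr0_norm ?lamP_gt0 // in eigP; rewrite normrN gtr0_norm ?lamM_gt0 // in eigM.
by do !split; rewrite ?lamP_mul_lamM ?psi_normalized.
Qed.
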